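(* Let $G_1=(V_1,E_1)$ and $G_2=(V_2,E_2)$ be graphs such that $V_1\cap V_2$ induces a clique in both $G_1$ and $G_2$ and $|V_1\cap V_2|=k\le 3$, and let $G=(V_1\cup V_2,E_1\cup E_2)$ (their clique $k$-sum). Then $\kappa(G)=\max(\kappa(G_1),\kappa(G_2))$.
   Context: For a graph $G=([n],E)$ and $w\in\mathbb{R}^E$, let $\mathrm{ip}(G,w)=\max_{x\in\{\pm1\}^n}\sum_{ij\in E}w_{ij}x_ix_j$ and $\mathrm{sdp}(G,w)=\max\sum_{ij\in E}w_{ij}u_i^Tu_j$, the maximum over unit vectors $u_1,\dots,u_n\in\mathbb{R}^n$. The Grothendieck constant of $G$ is $\kappa(G)=\sup_{w\in\mathbb{R}^E}\mathrm{sdp}(G,w)/\mathrm{ip}(G,w)$. *)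

From HB Require Import structures.
From mathcomp Require Import all_boot all_order all_algebra.
From mathcomp Require Import all_classical all_reals ereal.
Set Implicit Arguments. Unset Strict Implicit. Unset Printing Implicit Defensive.
Import Order.TTheory GRing.Theory Num.Theory.
Local Open Scope ring_scope.
Local Open Scope classical_set_scope.

(* A finite simple graph with vertex set V included in the ambient ordinals 'I_N.
   Each (unordered) edge {i,j} is represented exactly once, by the ordered pair
   (i,j) with i < j. *)
Definition graph_wf (N : nat) (V : {set 'I_N}) (E : {set 'I_N * 'I_N}) : Prop :=
  forall p, p \in E -> [/\ (p.1 < p.2)%N, p.1 \in V & p.2 \in V].

Definition is_clique (N : nat) (V : {set 'I_N}) (E : {set 'I_N * 'I_N})
  (S : {set 'I_N}) : Prop :=
  S \subset V /\ forall i j, i \in S -> j \in S -> (i < j)%N -> (i, j) \in E.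

Definition dotv (R : realType) (n : nat) (u v : 'rV[R]_n) : R :=
  \sum_(k < n) u ord0 k * v ord0 k.

Definition ip (R : realType) (N : nat) (V : {set 'I_N}) (E : {set 'I_N * 'I_N})
  (w : 'I_N * 'I_N -> R) : R :=
  sup [set r | exists x : 'I_N -> R,
        (forall i, i \in V -> x i = 1 \/ x i = -1) /\
        r = \sum_(p in E) w p * x p.1 * x p.2].

Definition sdp (R : realType) (N : nat) (V : {set 'I_N}) (E : {set 'I_N * 'I_N})
  (w : 'I_N * 'I_N -> R) : R :=
  sup [set r | exists u : 'I_N -> 'rV[R]_#|V|,
        (forall i, i \in V -> dotv (u i) (u i) = 1) /\
        r = \sum_(p in E) w p * dotv (u p.1) (u p.2)].

(* Grothendieck constant of the graph: sup over weights w with ip(G,w) > 0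
   (i.e. w nonzero on E) of sdp/ip.  Value in the extended reals; equals -oo
   for edgeless graphs (empty supremum). *)
Definition kappa (R : realType) (N : nat) (V : {set 'I_N}) (E : {set 'I_N * 'I_N})
  : \bar R :=
  ereal_sup [set ((sdp V E w / ip V E w)%:E) |
             w in [set w : 'I_N * 'I_N -> R | 0 < ip V E w]].

(* Adding edges cannot decrease kappa, which gives one inequality.  For the other,
   fix a weight w on the clique sum G and let S be the common clique.  Maximising
   the part of the +-1 objective carried by the private edges of G1 over all sign
   vectors with a prescribed pattern on S gives a function h of that pattern that is
   invariant under flipping all signs; since |S| <= 3, such a function is a constant a
   plus a combination sum c_ij x_i x_j over the edges of S.  Moving -c onto the clique
   edges of G1 and +c onto those of G2 splits w = w1 + w2 with ip(G1,w1) <= a and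
   ip(G2,w2) <= ip(G,w) - a (glue a maximiser for G2 to the best extension of its
   pattern into G1), whereas ip(G,w) <= ip(G1,w1) + ip(G2,w2) is trivial.  The sdp
   objective is additive over the split, so
   sdp(G,w) <= kappa(G1) ip(G1,w1) + kappa(G2) ip(G2,w2) <= max(kappa(G1),kappa(G2)) ip(G,w). *)

From HB Require Import structures.
From mathcomp Require Import all_boot all_order all_algebra.
From mathcomp Require Import all_classical all_reals ereal.
From mathcomp Require Import ring lra zify.
Import Order.TTheory GRing.Theory Num.Theory.
Local Open Scope ring_scope.
Set Implicit Arguments. Unset Strict Implicit. Unset Printing Implicit Defensive.

Section DotProduct.
Variable R : realType.

Lemma dotvE n (u v : 'rV[R]_n) : dotv u v = (u *m v^T) ord0 ord0.
Proof. by rewrite /dotv mxE; apply: eq_bigr => k _; rewrite mxE. Qed.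

Lemma dotvC n (u v : 'rV[R]_n) : dotv u v = dotv v u.
Proof. by rewrite /dotv; apply: eq_bigr => k _; exact: mulrC. Qed.

Lemma dotvDl n (u v w : 'rV[R]_n) : dotv (u + v) w = dotv u w + dotv v w.
Proof. by rewrite /dotv -big_split; apply: eq_bigr => k _; rewrite mxE mulrDl. Qed.

Lemma dotvZl n a (u w : 'rV[R]_n) : dotv (a *: u) w = a * dotv u w.
Proof. by rewrite /dotv mulr_sumr; apply: eq_bigr => k _; rewrite mxE mulrA. Qed.

Lemma dotvBl n (u v w : 'rV[R]_n) : dotv (u - v) w = dotv u w - dotv v w.
Proof. by rewrite dotvDl -scaleN1r dotvZl mulN1r. Qed.

Lemma dotv0l n (w : 'rV[R]_n) : dotv 0 w = 0.
Proof. by rewrite /dotv big1 // => k _; rewrite mxE mul0r. Qed.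

Lemma dotv0r n (w : 'rV[R]_n) : dotv w 0 = 0.
Proof. by rewrite dotvC dotv0l. Qed.

Lemma dotv_ge0 n (u : 'rV[R]_n) : 0 <= dotv u u.
Proof. by apply: sumr_ge0 => k _; rewrite -expr2 sqr_ge0. Qed.

Lemma dotv_eq0 n (u : 'rV[R]_n) : dotv u u = 0 -> u = 0.
Proof.
move=> u0; apply/rowP => k; rewrite mxE.
have ge0 (i : 'I_n) : predT i -> 0 <= u ord0 i * u ord0 i.
  by rewrite -expr2 sqr_ge0.
by have /eqP := psumr_eq0P ge0 u0 (i := k) isT; rewrite mulf_eq0 orbb => /eqP.
Qed.

Lemma dotv_row_mx m n (a c : 'rV[R]_m) (b d : 'rV[R]_n) :
  dotv (row_mx a b) (row_mx c d) = dotv a c + dotv b d.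
Proof.
by rewrite /dotv big_split_ord; congr (_ + _); apply: eq_bigr => k _;
  rewrite ?row_mxEl ?row_mxEr.
Qed.

Lemma dotv_const (x y : R) : dotv (const_mx x : 'rV[R]_1) (const_mx y) = x * y.
Proof. by rewrite /dotv big_ord1 !mxE. Qed.

Lemma dotv_const_row_mx n (x y : R) (b d : 'rV[R]_n) :
  @dotv R n.+1 (row_mx (const_mx x : 'rV_1) b) (row_mx (const_mx y : 'rV_1) d)
  = x * y + dotv b d.
Proof. by rewrite -dotv_const -dotv_row_mx. Qed.

Lemma dotv_subZ n (u v a : 'rV[R]_n) s t :
  dotv (u - s *: a) (v - t *: a) =
  dotv u v - t * dotv u a - s * dotv a v + s * t * dotv a a.
Proof.
rewrite dotvBl dotvZl (dotvC u) (dotvC a) !dotvBl !dotvZl (dotvC v u) (dotvC a u).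
by rewrite (dotvC v a); ring.
Qed.

(* Gram–Schmidt in disguise: the first coordinate of [g i] is the component of
   [f i] along [f ord0], the others realize the Gram matrix of the projections
   of the remaining vectors onto the orthogonal complement of [f ord0]. *)
Lemma gram_reduce k : forall m (f : 'I_k -> 'rV[R]_m),
  exists g : 'I_k -> 'rV[R]_k, forall i j, dotv (g i) (g j) = dotv (f i) (f j).
Proof.
elim: k => [|k IH] m f; first by exists (fun _ => 0) => -[].
set a := f ord0; set A := dotv a a; set sq := Num.sqrt A.
have sqE x y : x / sq * (y / sq) = x * y / A.
  by rewrite mulf_div -expr2 sqr_sqrtr ?dotv_ge0.
pose t i := dotv (f i) a / A.
have [h Hh] := IH m (fun i => f (lift ord0 i) - t (lift ord0 i) *: a).
pose g i : 'rV[R]_k.+1 :=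
  row_mx (const_mx (dotv (f i) a / sq) : 'rV_1) (odflt 0 (omap h (unlift ord0 i))).
exists g => i j; rewrite /g dotv_const_row_mx sqE.
have [A0|An0] := eqVneq A 0.
  have a0 : a = 0 by apply: dotv_eq0.
  have fa0 l : dotv (f l) a = 0 by rewrite a0 dotv0r.
  have t0 l : t l = 0 by rewrite /t fa0 mul0r.
  rewrite !fa0 mul0r mul0r add0r.
  case: (unliftP ord0 i) => [i'|] ->; case: (unliftP ord0 j) => [j'|] -> /=.
  - by rewrite Hh !t0 !scale0r !subr0.
  - by rewrite dotv0r -/a a0 dotv0r.
  - by rewrite dotv0l -/a a0 dotv0l.
  - by rewrite dotv0l -/a a0 dotv0l.
case: (unliftP ord0 i) => [i'|] ->; case: (unliftP ord0 j) => [j'|] -> /=.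
- by rewrite Hh /t dotv_subZ -/a -/A (dotvC (f (lift ord0 j'))); field.
- by rewrite dotv0r addr0 -/a -/A mulfK.
- by rewrite dotv0l addr0 -/A mulrC mulrA mulVf // mul1r dotvC.
- by rewrite dotv0l addr0 -/A mulfK.
Qed.

Lemma row_isometry k d : (k <= d)%N ->
  exists e : 'rV[R]_k -> 'rV[R]_d, forall u v, dotv (e u) (e v) = dotv u v.
Proof.
move=> le_kd; pose P := \matrix_(t < k, l < d) ((val t == val l)%:R : R).
have PPT : P *m P^T = 1%:M.
  apply/matrixP => i j; rewrite !mxE (bigD1 (widen_ord le_kd i)) //= big1.
    by rewrite !mxE /= eqxx mul1r addr0 eq_sym.
  move=> l ne; rewrite !mxE.
  have /negbTE -> : val i != val l by apply: contra ne => /eqP e; apply/eqP/val_inj.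
  by rewrite mul0r.
exists (mulmx^~ P) => u v.
by rewrite !dotvE trmx_mul mulmxA -(mulmxA u) PPT mulmx1.
Qed.

Lemma exists_unit_row d : (0 < d)%N -> exists v : 'rV[R]_d, dotv v v = 1.
Proof.
move=> d_gt0; have [e He] := row_isometry d_gt0.
by exists (e (const_mx 1)); rewrite He dotv_const mulr1.
Qed.

Lemma gram_reduce_on N (A : {set 'I_N}) d d' (u : 'I_N -> 'rV[R]_d) : (#|A| <= d')%N ->
  exists u' : 'I_N -> 'rV[R]_d', forall i j, i \in A -> j \in A ->
    dotv (u' i) (u' j) = dotv (u i) (u j).
Proof.
move=> le_Ad; have [->|[x0 Ax0]] := set_0Vmem A.
  by exists (fun _ => 0) => i j; rewrite inE.
have [g Hg] := gram_reduce (fun t : 'I_#|A| => u (enum_val t)).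
have [e He] := row_isometry le_Ad.
exists (fun i => e (g (enum_rank_in Ax0 i))) => i j Ai Aj.
by rewrite He Hg !enum_rankK_in.
Qed.

End DotProduct.

Section Signs.
Variables (R : realType) (N : nat).
Implicit Types (V : {set 'I_N}) (E : {set 'I_N * 'I_N}) (w : 'I_N * 'I_N -> R).

Definition flip (i k : 'I_N) : R := if k == i then -1 else 1.

Lemma one_sub_flip_mul i a b :
  1 - flip i a * flip i b = if (a == i) != (b == i) then 2 else 0.
Proof. by rewrite /flip; case: (a == i); case: (b == i) => /=; lra. Qed.

Lemma flip_edge_detect (p e : 'I_N * 'I_N) : (p.1 < p.2)%N -> (e.1 < e.2)%N ->
  (1 - flip e.1 p.1 * flip e.1 p.2) * (1 - flip e.2 p.1 * flip e.2 p.2)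
    = if p == e then 4 else 0.
Proof.
case: p e => [p1 p2] [e1 e2] /= lp le.
rewrite !one_sub_flip_mul xpair_eqE -!val_eqE /=.
case: (p1 =P e1 :> nat); case: (p2 =P e1 :> nat); case: (p1 =P e2 :> nat);
  case: (p2 =P e2 :> nat) => /= *; lia || lra.
Qed.

Definition sign (u : bool) : R := if u then 1 else -1.

Lemma signM u v : sign u * sign v = sign (u == v).
Proof. by rewrite /sign; case: u; case: v; rewrite /= ?mulr1 ?mul1r ?mulN1r ?opprK. Qed.

Definition sgn (b : {ffun 'I_N -> bool}) (i : 'I_N) : R := sign (b i).

Definition pm1_on V (x : 'I_N -> R) := forall i, i \in V -> x i = 1 \/ x i = -1.

Definition qform E w (x : 'I_N -> R) := \sum_(p in E) w p * (x p.1 * x p.2).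

Lemma graph_wf_sub V E E' : graph_wf V E -> E' \subset E -> graph_wf V E'.
Proof. by move=> wf sE p /(fintype.subsetP sE); apply: wf. Qed.

Lemma qform_eq_on V E w x y :
  graph_wf V E -> {in V, x =1 y} -> qform E w x = qform E w y.
Proof. by move=> wf xy; apply: eq_bigr => p /wf[_ p1V p2V]; rewrite !xy. Qed.

Lemma pm1_on_sgn V b : pm1_on V (sgn b).
Proof. by move=> i _; rewrite /sgn /sign; case: (b i); [left|right]. Qed.

Lemma pm1_on_flip V i : pm1_on V (flip i).
Proof. by move=> k _; rewrite /flip; case: ifP; [right|left]. Qed.

Lemma pm1_onM V x y : pm1_on V x -> pm1_on V y -> pm1_on V (fun k => x k * y k).
Proof.
move=> hx hy k kV; case: (hx k kV) => ->; case: (hy k kV) => ->;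
rewrite ?mulr1 ?mul1r ?mulN1r ?opprK; by [left|right].
Qed.

Lemma sgn_of_pm1 V x : pm1_on V x -> {in V, x =1 sgn [ffun i => x i == 1]}.
Proof.
move=> hx i iV; rewrite /sgn /sign ffunE.
have m1 : (-1 == 1 :> R) = false by apply/eqP; lra.
by case: (hx i iV) => ->; rewrite ?eqxx ?m1.
Qed.

Lemma sup_range_fin (I : finType) (i0 : I) (F : I -> R) :
  exists2 i, sup (range F) = F i & forall j, F j <= sup (range F).
Proof.
have [i _ Fi_max] := @arg_maxP _ _ _ i0 predT F isT.
have ub : ubound (range F) (F i) by move=> _ [j _ <-]; exact: Fi_max.
have -> : sup (range F) = F i.
  apply/le_anti/andP; split; first by apply: ge_sup => //; exists (F i), i.
  by apply: ub_le_sup; [exists (F i) | exists i].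
by exists i => // j; apply: Fi_max.
Qed.

Lemma qformE E w x : \sum_(p in E) w p * x p.1 * x p.2 = qform E w x.
Proof. by apply: eq_bigr => p _; rewrite mulrA. Qed.

Lemma ip_sgnE V E w : graph_wf V E ->
  ip V E w = sup (range (fun b => qform E w (sgn b))).
Proof.
move=> wf; rewrite /ip; congr sup; apply/seteqP; split => r /=.
  move=> [x [hx ->]]; exists [ffun i => x i == 1] => //.
  by rewrite qformE; symmetry; apply: qform_eq_on wf (sgn_of_pm1 hx).
by move=> [b _ <-]; exists (sgn b); rewrite qformE; split => //; apply: pm1_on_sgn.
Qed.

Lemma ip_max V E w : graph_wf V E ->
  exists2 b, ip V E w = qform E w (sgn b) & forall b', qform E w (sgn b') <= ip V E w.
Proof. by move=> wf; rewrite ip_sgnE //; apply: sup_range_fin [ffun => true] _. Qed.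

Definition toggle (p : 'I_N) (b : {ffun 'I_N -> bool}) : {ffun 'I_N -> bool} :=
  [ffun k => (k == p) (+) b k].

Lemma toggleK p : involutive (toggle p).
Proof. by move=> b; apply/ffunP => k; rewrite !ffunE addKb. Qed.

Lemma sum_sgn_mul p q : p != q -> \sum_(b : {ffun 'I_N -> bool}) sgn b p * sgn b q = 0.
Proof.
move=> pq; set S := \sum_b _.
(* toggling the sign at p negates every summand *)
suff : S = - S by lra.
rewrite {1}/S (reindex_inj (inv_inj (toggleK p))) -sumrN.
apply: eq_bigr => b _; rewrite /sgn /sign !ffunE eqxx eq_sym (negbTE pq).
by case: (b p); rewrite /= ?mulNr ?opprK.
Qed.

Lemma sum_qform_sgn V E w : graph_wf V E ->
  \sum_(b : {ffun 'I_N -> bool}) qform E w (sgn b) = 0.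
Proof.
move=> wf; rewrite exchange_big /=; apply: big1 => p /wf[lt _ _].
by rewrite -mulr_sumr sum_sgn_mul ?mulr0 // neq_ltn lt.
Qed.

Lemma ip_ge0 V E w : graph_wf V E -> 0 <= ip V E w.
Proof.
move=> wf; have [_ _ ub] := ip_max w wf.
have : \sum_(b : {ffun 'I_N -> bool}) qform E w (sgn b) <=
       \sum_(b : {ffun 'I_N -> bool}) ip V E w by apply: ler_sum => b _.
rewrite (sum_qform_sgn w wf) sumr_const pmulrn_lge0 //.
by apply/card_gt0P; exists [ffun => true].
Qed.

Lemma ip_eq0_qform V E w x : graph_wf V E -> ip V E w = 0 ->
  pm1_on V x -> qform E w x = 0.
Proof.
move=> wf ip0 hx; rewrite (qform_eq_on w wf (sgn_of_pm1 hx)).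
have [_ _ ub] := ip_max w wf; rewrite ip0 in ub.
have ge0 (b : {ffun 'I_N -> bool}) : predT b -> 0 <= - qform E w (sgn b).
  by rewrite oppr_ge0.
have sum0 : \sum_(b : {ffun 'I_N -> bool}) - qform E w (sgn b) = 0.
  by rewrite sumrN (sum_qform_sgn w wf) oppr0.
by apply/eqP; rewrite -oppr_eq0; apply/eqP/(psumr_eq0P ge0 sum0).
Qed.

Lemma ip_eq0_weight V E w e : graph_wf V E -> ip V E w = 0 -> e \in E -> w e = 0.
Proof.
move=> wf ip0 eE; have [lte _ _] := wf e eE.
pose u := flip e.1; pose v := flip e.2.
have detect : qform E w (fun=> 1) - qform E w u - qform E w v
              + qform E w (fun k => u k * v k) = 4 * w e.
  rewrite /qform -!sumrB -big_split /= (bigD1 e) //= big1 => [|p /andP[pE pe]].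
    rewrite addr0 (_ : 4 * w e = w e * ((1 - u e.1 * u e.2) * (1 - v e.1 * v e.2))).
      by rewrite /u /v; ring.
    by rewrite flip_edge_detect // eqxx mulrC.
  have [ltp _ _] := wf p pE.
  have := flip_edge_detect ltp lte; rewrite (negbTE pe) => detect0.
  by rewrite -[RHS](mulr0 (w p)) -detect0 /u /v; ring.
have pm1_1 : pm1_on V (fun=> 1) by left.
have pm1_u : pm1_on V u by apply: pm1_on_flip.
have pm1_v : pm1_on V v by apply: pm1_on_flip.
have pm1_uv : pm1_on V (fun k => u k * v k) by apply: pm1_onM.
by move: detect; rewrite !(ip_eq0_qform wf ip0) // => detect; lra.
Qed.

End Signs.
Arguments sign {R}.
Arguments sgn {R N}.

Section Kappa.
Variables (R : realType) (N : nat).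
Implicit Types (V : {set 'I_N}) (E : {set 'I_N * 'I_N}) (w : 'I_N * 'I_N -> R).

Definition unit_on V d (u : 'I_N -> 'rV[R]_d) :=
  forall i, i \in V -> dotv (u i) (u i) = 1.

Definition sdp_value E w d (u : 'I_N -> 'rV[R]_d) :=
  \sum_(p in E) w p * dotv (u p.1) (u p.2).

Lemma unit_dotv_le1 d (u v : 'rV[R]_d) :
  dotv u u = 1 -> dotv v v = 1 -> `|dotv u v| <= 1.
Proof.
move=> uu vv; have := dotv_ge0 (u - 1 *: v); have := dotv_ge0 (u - (-1) *: v).
rewrite !dotv_subZ uu vv (dotvC v u) => h1 h2.
by rewrite ler_norml; apply/andP; split; lra.
Qed.

Lemma sdp_value_le_norm1 V E w d (u : 'I_N -> 'rV[R]_d) : graph_wf V E ->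
  unit_on V u -> sdp_value E w u <= \sum_(p in E) `|w p|.
Proof.
move=> wf hu; apply: ler_sum => p /wf[_ p1V p2V].
apply: (le_trans (ler_norm _)); rewrite normrM; apply: ler_piMr => //.
exact: unit_dotv_le1 (hu _ p1V) (hu _ p2V).
Qed.

Lemma sdp_value_le V E w d (u : 'I_N -> 'rV[R]_d) : graph_wf V E ->
  unit_on V u -> sdp_value E w u <= sdp V E w.
Proof.
move=> wf hu; have [u' Hu'] := gram_reduce_on u (leqnn #|V|).
have -> : sdp_value E w u = sdp_value E w u'.
  by apply: eq_bigr => p /wf[_ p1V p2V]; rewrite Hu'.
apply: ub_le_sup.
  by exists (\sum_(p in E) `|w p|) => _ [v [hv ->]]; apply: sdp_value_le_norm1 hv.
by exists u'; split => // i iV; rewrite Hu' //; apply: hu.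
Qed.

Lemma sdp_le V E w c : graph_wf V E -> (0 < #|V|)%N ->
  (forall u : 'I_N -> 'rV[R]_#|V|, unit_on V u -> sdp_value E w u <= c) ->
  sdp V E w <= c.
Proof.
move=> wf V_gt0 le_c; apply: ge_sup; last by move=> _ [u [hu ->]]; apply: le_c.
have [v vv] := exists_unit_row R V_gt0.
by exists (sdp_value E w (fun=> v)), (fun=> v).
Qed.

Lemma ip_gt0_card V E w : graph_wf V E -> 0 < ip V E w -> (0 < #|V|)%N.
Proof.
move=> wf; rewrite card_gt0; apply: contraTneq => V0.
have [b -> _] := ip_max w wf.
by rewrite /qform big1 ?ltxx // => p /wf[_]; rewrite V0 inE.
Qed.

Lemma sdp_value_le_kappa V E w d (u : 'I_N -> 'rV[R]_d) : graph_wf V E ->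
  unit_on V u -> ((sdp_value E w u)%:E <= kappa R V E * (ip V E w)%:E)%E.
Proof.
move=> wf hu; have [ip0|ip_neq0] := eqVneq (ip V E w) 0.
  by rewrite ip0 mule0 /sdp_value big1 // => p pE; rewrite (ip_eq0_weight wf ip0 pE) mul0r.
have ip_gt0 : 0 < ip V E w by rewrite lt_def ip_neq0 ip_ge0.
have ratio_le : ((sdp V E w / ip V E w)%:E <= kappa R V E)%E.
  by apply: ereal_sup_ubound; exists w.
apply: (le_trans (y := (sdp V E w)%:E)); first by rewrite lee_fin sdp_value_le.
rewrite -(divfK ip_neq0 (sdp V E w)) EFinM.
by apply: lee_wpmul2r ratio_le; rewrite lee_fin ltW.
Qed.

Lemma sdp_ratio_le V E w K : graph_wf V E -> 0 < ip V E w ->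
  (forall u : 'I_N -> 'rV[R]_#|V|, unit_on V u ->
     ((sdp_value E w u)%:E <= K * (ip V E w)%:E)%E) ->
  ((sdp V E w / ip V E w)%:E <= K)%E.
Proof.
move=> wf ip_gt0 le_K; have V_gt0 := ip_gt0_card wf ip_gt0.
case: K le_K => [k| |] le_K.
- rewrite lee_fin ler_pdivrMr //; apply: (sdp_le wf V_gt0) => u hu.
  by have := le_K u hu; rewrite -EFinM lee_fin.
- exact: leey.
- have [v vv] := exists_unit_row R V_gt0.
  have := le_K (fun=> v) (fun _ _ => vv).
  by rewrite gt0_mulNye ?lte_fin // leeNy_eq.
Qed.

Lemma sum_restrict E E' (F : 'I_N * 'I_N -> R) (G : 'I_N * 'I_N -> R) :
  E \subset E' ->
  \sum_(p in E') (if p \in E then F p else 0) * G p = \sum_(p in E) F p * G p.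
Proof.
move=> sE; rewrite [RHS]big_mkcond [LHS]big_mkcond; apply: eq_bigr => p _.
by case: (boolP (p \in E)) => [/(fintype.subsetP sE) ->|_]; case: (p \in E'); rewrite ?mul0r.
Qed.

Lemma kappa_le_subgraph V E V' E' : graph_wf V E -> graph_wf V' E' ->
  E \subset E' -> (kappa R V E <= kappa R V' E')%E.
Proof.
move=> wf wf' sE; apply: ge_ereal_sup => _ [w ip_gt0 <-].
pose w' p := if p \in E then w p else 0.
have ipE : ip V' E' w' = ip V E w.
  have qformE' : (fun b => qform E' w' (sgn b)) = (fun b => qform E w (sgn b)).
    by apply: boolp.funext => b; apply: sum_restrict.
  by rewrite !ip_sgnE // qformE'.
have V_gt0 := ip_gt0_card wf ip_gt0.
have [v vv] := exists_unit_row R V_gt0.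
have sdp_le' : sdp V E w <= sdp V' E' w'.
  apply: (sdp_le wf V_gt0) => u hu.
  pose u' i := if i \in V then u i else v.
  have hu' : unit_on V' u' by move=> i _; rewrite /u'; case: ifP => // /hu.
  have := sdp_value_le w' wf' hu'.
  rewrite /sdp_value sum_restrict //.
  by under eq_bigr => p /wf[_ p1V p2V] do rewrite /u' p1V p2V.
apply: (le_trans (y := (sdp V' E' w' / ip V' E' w')%:E)).
  by rewrite ipE lee_fin ler_wpM2r // invr_ge0 ltW.
by apply: ereal_sup_ubound; exists w' => //=; rewrite ipE.
Qed.

End Kappa.

Section EvenFunctions.
Variables (R : realType) (N : nat).
Implicit Types (S : {set 'I_N}) (b : {ffun 'I_N -> bool}) (F G : {ffun 'I_N -> bool} -> R).

Definition clique_pairs S :=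
  [set p : 'I_N * 'I_N | [&& p.1 \in S, p.2 \in S & (p.1 < p.2)%N]].

Definition quadratic_on S F := exists a (c : 'I_N * 'I_N -> R), forall b,
  F b = a + \sum_(p in clique_pairs S) c p * (sgn b p.1 * sgn b p.2).

Definition agree_on S (b b' : {ffun 'I_N -> bool}) := [forall i in S, b i == b' i].

Definition fneg (b : {ffun 'I_N -> bool}) : {ffun 'I_N -> bool} := [ffun i => ~~ b i].

Lemma sgn_fneg b i : sgn (fneg b) i = - sgn b i :> R.
Proof. by rewrite /sgn /sign ffunE; case: (b i); rewrite ?opprK. Qed.

Definition even_on S F :=
  forall b b', agree_on S b b' || agree_on S b (fneg b') -> F b = F b'.

Lemma agree_onP S b b' :
  reflect (forall i, i \in S -> b i = b' i) (agree_on S b b').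
Proof.
apply: (iffP forall_inP) => [same i /same/eqP //|same i /same ->].
exact: eqxx.
Qed.

Lemma agree_on_sym S b b' : agree_on S b b' = agree_on S b' b.
Proof. by apply/agree_onP/agree_onP => same i iS; rewrite same. Qed.

Lemma agree_on_trans S b1 b2 b3 :
  agree_on S b1 b2 -> agree_on S b2 b3 -> agree_on S b1 b3.
Proof. by move=> /agree_onP s12 /agree_onP s23; apply/agree_onP => i iS; rewrite s12 ?s23. Qed.

Lemma agree_on_fnegl S b b' : agree_on S (fneg b) b' = agree_on S b (fneg b').
Proof.
apply/agree_onP/agree_onP => same i iS.
  by rewrite ffunE -same // ffunE negbK.
by rewrite ffunE same // ffunE negbK.
Qed.

Lemma quadratic_on_cst S a : quadratic_on S (fun=> a).
Proof. by exists a, (fun=> 0) => b; rewrite big1 ?addr0 // => p _; rewrite mul0r. Qed.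

Lemma quadratic_onD S F G :
  quadratic_on S F -> quadratic_on S G -> quadratic_on S (fun b => F b + G b).
Proof.
move=> [a [c hF]] [a' [c' hG]]; exists (a + a'), (fun p => c p + c' p) => b.
by rewrite hF hG; under [in RHS]eq_bigr do rewrite mulrDl; rewrite big_split /=; ring.
Qed.

Lemma quadratic_onZ S k F : quadratic_on S F -> quadratic_on S (fun b => k * F b).
Proof.
move=> [a [c hF]]; exists (k * a), (fun p => k * c p) => b.
by rewrite hF mulrDr mulr_sumr; under eq_bigr do rewrite mulrA.
Qed.

Lemma quadratic_on_sgnM S i j :
  i \in S -> j \in S -> quadratic_on S (fun b => sgn b i * sgn b j).
Proof.
have [<- _ _|neq_ij] := eqVneq i j.
  have -> : (fun b => sgn b i * sgn b i) = fun b => 1 :> R.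
    by apply: boolp.funext => b; rewrite signM eqxx.
  exact: quadratic_on_cst.
wlog lt_ij : i j neq_ij / (i < j)%N => [hyp iS jS|iS jS].
  case: (ltngtP i j) => [lt|gt|/val_inj eq]; first exact: hyp.
  - have -> : (fun b => sgn b i * sgn b j) = fun b => sgn b j * sgn b i :> R.
      by apply: boolp.funext => b; rewrite mulrC.
    by apply: hyp; rewrite // eq_sym.
  - by rewrite eq eqxx in neq_ij.
exists 0, (fun p => (p == (i, j))%:R) => b.
rewrite add0r (bigD1 (i, j)) /=; last by rewrite inE iS jS lt_ij.
by rewrite eqxx mul1r big1 ?addr0 // => p /andP[_ /negbTE ->]; rewrite mul0r.
Qed.

Lemma bool2_interpolation (g : bool -> bool -> R) :
  exists a al be ga, forall u v,
    g u v = a + al * sign u + be * sign v + ga * (sign u * sign v).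
Proof.
exists ((g true true + g true false + g false true + g false false) / 4).
exists ((g true true + g true false - g false true - g false false) / 4).
exists ((g true true - g true false + g false true - g false false) / 4).
exists ((g true true - g true false - g false true + g false false) / 4).
by case; case; rewrite /sign; lra.
Qed.

Lemma card_le3_set3 S : (0 < #|S| <= 3)%N -> exists x y z, S = [set x; y; z].
Proof.
move=> S_card; rewrite -(set_enum S); move: S_card; rewrite cardE.
case: (enum S) => [|x [|y [|z [|t s]]]] //= _;
  [exists x, x, x | exists x, y, y | exists x, y, z];
  by apply/setP => i; rewrite !inE -!orbA ?orbb.
Qed.

(* Even functions of at most three signs are spanned by the constant and the pairwise
   products; for four signs the dimensions 2^3 and 1 + 6 no longer match. *)
Lemma even_quadratic_on S F : (#|S| <= 3)%N -> even_on S F -> quadratic_on S F.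
Proof.
move=> S_le3 evF; have [S0|S_gt0] := posnP #|S|.
  have -> : F = fun=> F [ffun=> true].
    apply: boolp.funext => b; apply: evF; apply/orP; left.
    by apply/agree_onP => i; rewrite (cards0_eq S0) inE.
  exact: quadratic_on_cst.
have [x [y [z SE]]] : exists x y z, S = [set x; y; z].
  by apply: card_le3_set3; rewrite S_gt0.
have [xS yS zS] : [/\ x \in S, y \in S & z \in S] by rewrite SE !inE !eqxx !orbT.
(* Up to a global flip, a sign pattern on S = {x, y, z} is determined by whether
   y and z agree with x. *)
pose mk (u v : bool) : {ffun 'I_N -> bool} :=
  [ffun i => if i == y then u else if i == z then v else true].
have mkE b : F b = F (mk (b x == b y) (b x == b z)).
  set m := mk _ _.
  have m_on i : i \in S -> m i = (b x == b i).
    rewrite ffunE SE !inE; case: (i =P y) => [->|_] //=; case: (i =P z) => [->|_] //=.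
    by rewrite !orbF => /eqP->; rewrite eqxx.
  apply: evF; apply/orP; move: m_on; case: (b x) => m_on; [left|right];
    apply/agree_onP => i iS.
  - by rewrite m_on //; case: (b i).
  - by rewrite /fneg ffunE m_on //; case: (b i).
have [a [al [be [ga interp]]]] := bool2_interpolation (fun u v => F (mk u v)).
have -> : F = fun b => a + al * (sgn b x * sgn b y) + be * (sgn b x * sgn b z)
                       + ga * (sgn b y * sgn b z).
  apply: boolp.funext => b; rewrite mkE interp !signM; congr (_ + _ * sign _).
  by case: (b x); case: (b y); case: (b z).
exact: quadratic_onD (quadratic_onD (quadratic_onD (quadratic_on_cst S a)
  (quadratic_onZ al (quadratic_on_sgnM xS yS))) (quadratic_onZ be (quadratic_on_sgnM xS zS)))
  (quadratic_onZ ga (quadratic_on_sgnM yS zS)).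
Qed.

End EvenFunctions.

Section CliqueSum.
Variables (R : realType) (N : nat) (V1 V2 : {set 'I_N}) (E1 E2 : {set 'I_N * 'I_N}).
Hypotheses (wf1 : graph_wf V1 E1) (wf2 : graph_wf V2 E2).
Hypotheses (cl1 : is_clique V1 E1 (V1 :&: V2)) (cl2 : is_clique V2 E2 (V1 :&: V2)).
Implicit Types (b : {ffun 'I_N -> bool}) (x : 'I_N -> R).

Lemma graph_wfU : graph_wf (V1 :|: V2) (E1 :|: E2).
Proof.
move=> p; rewrite inE => /orP[/wf1|/wf2] [lt p1V p2V];
by split; rewrite // inE ?p1V ?p2V ?orbT.
Qed.

Lemma setI_clique_edges : E1 :&: E2 = clique_pairs (V1 :&: V2).
Proof.
apply/setP => p; rewrite finset.in_setI [p \in clique_pairs _]inE.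
apply/andP/idP => [[/wf1[lt p11 p21] /wf2[_ p12 p22]]|/and3P[p1S p2S lt]].
  by rewrite !finset.in_setI p11 p12 p21 p22 lt.
have [_ E1S] := cl1; have [_ E2S] := cl2.
by case: p p1S p2S lt => p1 p2 /= p1S p2S lt; split; [apply: E1S | apply: E2S].
Qed.

Variable w : 'I_N * 'I_N -> R.

Definition qform_private x := qform (E1 :\: E2) w x.

Definition best_extension b : {ffun 'I_N -> bool} :=
  [arg max_(b' > b | agree_on (V1 :&: V2) b' b) qform_private (sgn b')]%O.

Lemma best_extensionP b :
  agree_on (V1 :&: V2) (best_extension b) b /\
  forall b', agree_on (V1 :&: V2) b' b ->
    qform_private (sgn b') <= qform_private (sgn (best_extension b)).
Proof.
rewrite /best_extension; case: arg_maxP => [|b0 agree_b0 b0_max]; last by split.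
by apply/agree_onP.
Qed.

Lemma qform_private_fneg b : qform_private (sgn (fneg b)) = qform_private (sgn b).
Proof.
by apply: eq_bigr => p _; rewrite !sgn_fneg mulrNN.
Qed.

Lemma even_best_extension :
  even_on (V1 :&: V2) (fun b => qform_private (sgn (best_extension b))).
Proof.
have le_best b b' :
    agree_on (V1 :&: V2) b b' || agree_on (V1 :&: V2) b (fneg b') ->
    qform_private (sgn (best_extension b)) <= qform_private (sgn (best_extension b')).
  have [agree_b _] := best_extensionP b; have [_ best_max] := best_extensionP b'.
  case/orP => same; first exact/best_max/(agree_on_trans agree_b same).
  rewrite -qform_private_fneg; apply/best_max.
  by rewrite agree_on_fnegl; apply: agree_on_trans agree_b same.
move=> b b' same; apply/le_anti; rewrite !le_best //.
by rewrite agree_on_sym [agree_on _ b' _]agree_on_sym agree_on_fnegl.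
Qed.

Section Reweighting.
Variables (a : R) (c : 'I_N * 'I_N -> R).
Hypothesis best_quadratic : forall b, qform_private (sgn (best_extension b))
  = a + \sum_(p in E1 :&: E2) c p * (sgn b p.1 * sgn b p.2).

Definition weight1 p := if p \in E2 then - c p else w p.
Definition weight2 p := if p \in E1 then w p + c p else w p.

Lemma sum_reweight (G : 'I_N * 'I_N -> R) :
  \sum_(p in E1 :|: E2) w p * G p =
  \sum_(p in E1) weight1 p * G p + \sum_(p in E2) weight2 p * G p.
Proof.
rewrite !(big_mkcond (fun p => p \in _)) -big_split; apply: eq_bigr => p _.
by rewrite /weight1 /weight2 !inE; case: (p \in E1); case: (p \in E2) => /=; ring.
Qed.

Lemma qform_weight1 x : qform E1 weight1 x =
  qform_private x - \sum_(p in E1 :&: E2) c p * (x p.1 * x p.2).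
Proof.
rewrite /qform_private /qform -sumrN !(big_mkcond (fun p => p \in _)) -big_split.
apply: eq_bigr => p _.
by rewrite /weight1 !inE; case: (p \in E1); case: (p \in E2) => /=; ring.
Qed.

Lemma qform_weight2 x : qform E2 weight2 x =
  qform E2 w x + \sum_(p in E1 :&: E2) c p * (x p.1 * x p.2).
Proof.
rewrite /qform !(big_mkcond (fun p => p \in _)) -big_split; apply: eq_bigr => p _.
by rewrite /weight2 !inE; case: (p \in E1); case: (p \in E2) => /=; ring.
Qed.

Lemma qformU x : qform (E1 :|: E2) w x = qform_private x + qform E2 w x.
Proof.
rewrite /qform_private /qform !(big_mkcond (fun p => p \in _)) -big_split.
by apply: eq_bigr => p _; rewrite !inE; case: (p \in E1); case: (p \in E2) => /=; ring.
Qed.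

Lemma ip_weight1_le : ip V1 E1 weight1 <= a.
Proof.
have [b -> _] := ip_max weight1 wf1.
have agree_bb : agree_on (V1 :&: V2) b b by apply/agree_onP.
have := proj2 (best_extensionP b) b agree_bb; rewrite best_quadratic qform_weight1.
lra.
Qed.

(* Glue the best extension of the sign pattern of [b] to [b] itself along the
   common clique. *)
Lemma ip_weight2_le : ip V2 E2 weight2 <= ip (V1 :|: V2) (E1 :|: E2) w - a.
Proof.
have [b -> _] := ip_max weight2 wf2.
pose z : {ffun 'I_N -> bool} :=
  [ffun i => if i \in V1 then best_extension b i else b i].
have z_on1 : {in V1, sgn z =1 (sgn (best_extension b) : 'I_N -> R)}.
  by move=> i iV1; rewrite /sgn ffunE iV1.
have z_on2 : {in V2, sgn z =1 (sgn b : 'I_N -> R)}.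
  move=> i iV2; rewrite /sgn ffunE; case: (boolP (i \in V1)) => // iV1.
  by rewrite (agree_onP _ _ _ (proj1 (best_extensionP b))) // finset.in_setI iV1.
have [_ _ ub] := ip_max w graph_wfU.
have := ub z; rewrite qformU.
rewrite /qform_private (qform_eq_on _ (graph_wf_sub wf1 (finset.subsetDl E1 E2)) z_on1).
rewrite (qform_eq_on _ wf2 z_on2) -/(qform_private _) best_quadratic qform_weight2.
lra.
Qed.

Lemma ip_le_sum : ip (V1 :|: V2) (E1 :|: E2) w <= ip V1 E1 weight1 + ip V2 E2 weight2.
Proof.
have [b -> _] := ip_max w graph_wfU.
have [_ _ ub1] := ip_max weight1 wf1; have [_ _ ub2] := ip_max weight2 wf2.
by rewrite /qform sum_reweight; apply: lerD; [apply: ub1 | apply: ub2].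
Qed.

End Reweighting.

Lemma clique_sum_split : (#|V1 :&: V2| <= 3)%N -> exists w1 w2,
  (forall G : 'I_N * 'I_N -> R, \sum_(p in E1 :|: E2) w p * G p =
     \sum_(p in E1) w1 p * G p + \sum_(p in E2) w2 p * G p) /\
  ip V1 E1 w1 + ip V2 E2 w2 = ip (V1 :|: V2) (E1 :|: E2) w.
Proof.
move=> S_le3; have [a [c dec]] := even_quadratic_on S_le3 even_best_extension.
have best_quadratic b : qform_private (sgn (best_extension b))
    = a + \sum_(p in E1 :&: E2) c p * (sgn b p.1 * sgn b p.2).
  by rewrite setI_clique_edges dec.
exists (weight1 c), (weight2 c); split; first exact: sum_reweight.
apply/le_anti; rewrite ip_le_sum andbT.
by have := ip_weight1_le best_quadratic; have := ip_weight2_le best_quadratic; lra.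
Qed.

End CliqueSum.

Theorem mainTheorem5 (R : realType) (N : nat) (V1 V2 : {set 'I_N})
  (E1 E2 : {set 'I_N * 'I_N}) :
  graph_wf V1 E1 -> graph_wf V2 E2 ->
  is_clique V1 E1 (V1 :&: V2) -> is_clique V2 E2 (V1 :&: V2) ->
  (#|V1 :&: V2| <= 3)%N ->
  kappa R (V1 :|: V2) (E1 :|: E2) = Order.max (kappa R V1 E1) (kappa R V2 E2).
Proof.
move=> wf1 wf2 cl1 cl2 S_le3; have wfG := graph_wfU wf1 wf2.
apply/le_anti/andP; split; last first.
  by rewrite ge_max !(kappa_le_subgraph R _ wfG) // ?finset.subsetUl ?finset.subsetUr.
apply: ge_ereal_sup => _ [w ip_gt0 <-]; apply: sdp_ratio_le => // u hu.
have [w1 [w2 [sum_split ip_split]]] := clique_sum_split wf1 wf2 cl1 cl2 w S_le3.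
have hu1 : unit_on V1 u by move=> i iV1; apply: hu; rewrite inE iV1.
have hu2 : unit_on V2 u by move=> i iV2; apply: hu; rewrite inE iV2 orbT.
rewrite /sdp_value sum_split -ip_split !EFinD ge0_muleDr ?lee_fin ?ip_ge0 //.
apply: leeD.
- apply: (le_trans (sdp_value_le_kappa w1 wf1 hu1)).
  by apply: lee_wpmul2r; rewrite ?lee_fin ?ip_ge0 // le_max lexx.
- apply: (le_trans (sdp_value_le_kappa w2 wf2 hu2)).
  by apply: lee_wpmul2r; rewrite ?lee_fin ?ip_ge0 // le_max lexx orbT.
Qed.
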